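(* Let $(u,g,r,h)$ be a symmetric RUM-NCF in which each $g(x,y)$ is strictly positive on $\mathbb{R}$, and let $(p,f)$ be an SCF-RT generated by it. Then for any $(x,y)\in D$, with $q=p(x,y)/p(y,x)$: if $u(x)\geq u(y)$ then $F(y,x)$ $q$-FSD $F(x,y)$, and if $u(x)>u(y)$ then $F(y,x)$ $q$-SFSD $F(x,y)$.
   Context: $X$ is a finite set of options; $C=\{(x,y): x,y\in X,\ x\neq y\}$; $D\subseteq C$ is a fixed non-empty set with $(x,y)\in D\Rightarrow (y,x)\in D$. An SCF $p$ assigns to each $(x,y)\in D$ a number $p(x,y)>0$ with $p(x,y)+p(y,x)=1$. An SCF-RT is a pair $(p,f)$ where $p$ is an SCF and $f$ assigns to each $(x,y)\in D$ a strictly positive density $f(x,y)$ on $\mathbb{R}^+$ with cdf $F(x,y)$. A RUM is a pair $(u,g)$ with $u:X\to\mathbb{R}$ and $g$ assigning to each $(x,y)\in C$ a density $g(x,y)$ on $\mathbb{R}$ (cdf $G(x,y)$) with $\int v\,g(x,y)(v)\,dv=u(x)-u(y)=:v(x,y)$, $g(x,y)(v)=g(y,x)(-v)$ for all $v$, and connected support. A RUM-CF is $(u,g,r)$ with $(u,g)$ a RUM and $r:\mathbb{R}^{++}\to\mathbb{R}^+$ continuous, strictly decreasing where $r(v)>0$, $\lim_{v\to0}r(v)=\infty$, $\lim_{v\to\infty}r(v)=0$; $r^{-1}(t)$ ($t>0$) is the inverse of $r$ restricted to $\{r>0\}$. It is symmetric if $g(x,y)(v(x,y)+\delta)=g(x,y)(v(x,y)-\delta)$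 for all $(x,y)\in C$, $\delta\geq0$. A random utility model with a noisy chronometric function (RUM-NCF) is $(u,g,r,h)$ where $(u,g,r)$ is a RUM-CF and $h$ is a density on $\mathbb{R}^+$ of a non-negative random variable $\tilde\eta$ with mean one; the response time for realized utility difference $v$ is $r(|v|)\cdot\tilde\eta$ with $\tilde\eta$ independent. It is symmetric if $(u,g,r)$ is. An SCF-RT $(p,f)$ is generated by $(u,g,r,h)$ if for all $(x,y)\in D$: $p(y,x)=G(x,y)(0)$ and $F(x,y)(t)=\frac{\int_0^\infty[1-G(x,y)(r^{-1}(t/\eta))]h(\eta)\,d\eta}{1-G(x,y)(0)}$ for all $t>0$. For cdfs $G,H$ on $\mathbb{R}^+$ and $q>0$, $G$ $q$-FSD $H$ means $G(t)\leq qH(t)$ for all $t\geq0$; $q$-SFSD means additionally strict inequality for some $t$. *)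

From HB Require Import structures.
From mathcomp Require Import all_boot all_order all_algebra.
From mathcomp Require Import all_classical all_reals all_analysis.
Set Implicit Arguments. Unset Strict Implicit. Unset Printing Implicit Defensive.
Import Order.TTheory GRing.Theory Num.Theory.
Import numFieldNormedType.Exports.
Local Open Scope classical_set_scope.
Local Open Scope ring_scope.

Section Defs.
Variable R : realType.
Local Notation mu := (@lebesgue_measure R).
Definition Rplus_set : set R := `[0, +oo[%classic.

Definition density_R (g : R -> R) : Prop :=
  [/\ measurable_fun setT g, (forall v, 0 <= g v)
    & (\int[mu]_(v in setT) (g v)%:E = 1)%E].

(* a probability density on R+ = [0, +oo) (values on negatives irrelevant) *)
Definition density_Rplus (f : R -> R) : Prop :=
  [/\ measurable_fun Rplus_set f, (forall t, 0 <= t -> 0 <= f t)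
    & (\int[mu]_(t in Rplus_set) (f t)%:E = 1)%E].

Definition cdf_R (g : R -> R) (t : R) : R :=
  Rintegral mu (`]-oo, t]%classic : set R) g.

Definition cdf_Rplus (f : R -> R) (t : R) : R :=
  Rintegral mu (`[0, t]%classic : set R) f.

Definition support (g : R -> R) : set R := closure [set v | 0 < g v].

Definition is_domain (X : finType) (D : set (X * X)) : Prop :=
  [/\ D !=set0, (forall x y, D (x, y) -> x != y)
    & (forall x y, D (x, y) -> D (y, x))].

Definition is_SCF (X : finType) (D : set (X * X)) (p : X -> X -> R) : Prop :=
  forall x y, D (x, y) -> 0 < p x y /\ p x y + p y x = 1.

(* SCF-RT (p,f); the cdf F(x,y) is cdf_Rplus (f x y) *)
Definition is_SCF_RT (X : finType) (D : set (X * X))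
    (p : X -> X -> R) (f : X -> X -> R -> R) : Prop :=
  is_SCF D p /\
  forall x y, D (x, y) ->
    density_Rplus (f x y) /\ (forall t, 0 <= t -> 0 < f x y t).

(* RUM (u,g): g(x,y) defined for all (x,y) in C, i.e. x <> y *)
Definition is_RUM (X : finType) (u : X -> R) (g : X -> X -> R -> R) : Prop :=
  forall x y, x != y ->
    [/\ density_R (g x y),
        mu.-integrable setT (fun v => (v * g x y v)%:E),
        Rintegral mu setT (fun v => v * g x y v) = u x - u y,
        (forall v, g x y v = g y x (- v))
      & connected (support (g x y))].

(* chronometric function r : R++ -> R+ (values at v <= 0 irrelevant) *)
Definition is_chronometric (r : R -> R) : Prop :=
  [/\ (forall v, 0 < v -> 0 <= r v),
      {within (`]0, +oo[%classic : set R), continuous r},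
      (forall a b, 0 < a -> a < b -> 0 < r a -> 0 < r b -> r b < r a),
      r x @[x --> 0^'+] --> +oo
    & r x @[x --> +oo] --> 0].

Definition rinv (r : R -> R) (t : R) : R :=
  xget 0 [set v | 0 < v /\ 0 < r v /\ r v = t].

Definition is_RUM_CF (X : finType) (u : X -> R) (g : X -> X -> R -> R)
    (r : R -> R) : Prop :=
  is_RUM u g /\ is_chronometric r.

Definition symmetric_RUM_CF (X : finType) (u : X -> R) (g : X -> X -> R -> R)
    : Prop :=
  forall x y, x != y -> forall d, 0 <= d ->
    g x y (u x - u y + d) = g x y (u x - u y - d).

Definition is_noise (h : R -> R) : Prop :=
  [/\ density_Rplus h,
      mu.-integrable Rplus_set (fun e => (e * h e)%:E)
    & Rintegral mu Rplus_set (fun e => e * h e) = 1].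

Definition is_RUM_NCF (X : finType) (u : X -> R) (g : X -> X -> R -> R)
    (r : R -> R) (h : R -> R) : Prop :=
  is_RUM_CF u g r /\ is_noise h.

Definition symmetric_RUM_NCF (X : finType) (u : X -> R) (g : X -> X -> R -> R)
    (r : R -> R) (h : R -> R) : Prop :=
  is_RUM_NCF u g r h /\ symmetric_RUM_CF u g.

Definition generated_by (X : finType) (D : set (X * X))
    (p : X -> X -> R) (f : X -> X -> R -> R)
    (u : X -> R) (g : X -> X -> R -> R) (r : R -> R) (h : R -> R) : Prop :=
  forall x y, D (x, y) ->
    p y x = cdf_R (g x y) 0 /\
    forall t, 0 < t ->
      cdf_Rplus (f x y) t =
        Rintegral mu Rplus_set
          (fun e => (1 - cdf_R (g x y) (rinv r (t / e))) * h e)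
        / (1 - cdf_R (g x y) 0).

Definition qFSD (G H : R -> R) (q : R) : Prop :=
  forall t, 0 <= t -> G t <= q * H t.

Definition qSFSD (G H : R -> R) (q : R) : Prop :=
  qFSD G H q /\ exists t, 0 <= t /\ G t < q * H t.

End Defs.

From HB Require Import structures.
From mathcomp Require Import all_boot all_order all_algebra.
From mathcomp Require Import all_classical all_reals all_analysis.
From mathcomp Require Import ring lra measurable_realfun.
Import Order.TTheory GRing.Theory Num.Theory.
Import numFieldNormedType.Exports.
Local Open Scope classical_set_scope.
Local Open Scope ring_scope.

(* Symmetry of g(x,y) about v = u(x) - u(y), combined with
   g(y,x)(w) = g(x,y)(-w), makes g(y,x) the translate of g(x,y) by 2v, so
   G(y,x)(c) = G(x,y)(c + 2v).  As 1 - G(x,y)(0) = p(x,y) and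
   1 - G(y,x)(0) = p(y,x), the generating formula gives, with
   rho = r^-1(t / eta),
     p(y,x) (q F(x,y)(t) - F(y,x)(t)) = int (G(x,y)(rho + 2v) - G(x,y)(rho)) h,
   whose integrand is nonnegative for v >= 0.  For v > 0 and g(x,y) > 0 it is
   h times a positive function, and int h = 1 makes the integral positive. *)

Section lebesgue_translation.
Context {R : realType}.
Local Notation mu := (@lebesgue_measure R).

Lemma measurable_addr (s : R) : measurable_fun setT (fun w : R => w + s).
Proof. exact: (measurable_funD (f := id) (g := cst s)). Qed.

(* The two measures agree on the intervals ]a, b], which determine
   Lebesgue measure. *)
Lemma lebesgue_measure_addr (s : R) (A : set R) : measurable A ->
  pushforward mu (fun w => w + s) A = mu A.
Proof.
have ms : @measurable_fun _ _ (measurableTypeR R) (measurableTypeR R) setT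
    (fun w => w + s) := measurable_addr s.
move=> mA; rewrite (lebesgue_measure_unique
  (mu := measure_function_pushforward__canonical__measure_function_Measure
           mu ms)) //= => _ [[a b] _ <-]; rewrite /pushforward /=.
have -> : (fun w => w + s) @^-1` `]a, b] = `](a - s), (b - s)]%classic :> set R.
  by apply/seteqP; split => w /=; rewrite !in_itv /= lerBrDr ltrBlDr.
rewrite !lebesgue_measure_itv /= !lte_fin ltrD2r.
by case: ifP => // _; rewrite -!EFinD opprB addrA subrK.
Qed.

Lemma ge0_integral_addr (s : R) (A : set R) (k : R -> \bar R) :
  measurable A -> measurable_fun setT k -> (forall w, 0 <= k w)%E ->
  (\int[mu]_(w in (fun w => w + s)%R @^-1` A) k (w + s)%R =
   \int[mu]_(w in A) k w)%E.
Proof.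
have ms : @measurable_fun _ _ (measurableTypeR R) (measurableTypeR R) setT
    (fun w => w + s) := measurable_addr s.
move=> mA mk k0.
rewrite [RHS](@eq_measure_integral _ (measurableTypeR R) R _
  (@pushforward _ _ (measurableTypeR R) (measurableTypeR R) R mu
    (fun w => w + s))); last first.
  by move=> B mB _; exact: (esym (lebesgue_measure_addr s B mB)).
rewrite (@ge0_integral_pushforward _ _ _ _ _ _ ms mu) //.
exact: measurable_funTS.
Qed.

End lebesgue_translation.

Section positive_integrals.
Context {d} {T : measurableType d} {R : realType}.
Variables (mu : {measure set T -> \bar R}) (D : set T).
Hypothesis mD : measurable D.

Lemma integrable_mul_le1 (phi f : T -> R) :
  measurable_fun D phi -> (forall x, D x -> `|phi x| <= 1) ->
  mu.-integrable D (EFin \o f) -> mu.-integrable D (EFin \o (phi \* f)).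
Proof.
move=> mphi phi1 intf; have /measurable_EFinP mf := measurable_int mu intf.
apply: le_integrable intf => //; first exact/measurable_EFinP/measurable_funM.
move=> x Dx /=; rewrite lee_fin normrM.
by rewrite ler_piMl // phi1.
Qed.

Lemma ge0_Rintegral_eq0_ae (f : T -> R) :
  mu.-integrable D (EFin \o f) -> (forall x, D x -> 0 <= f x) ->
  Rintegral mu D f = 0 -> ae_eq mu D (EFin \o f) (cst 0%E).
Proof.
move=> intf f0 If0; apply/(ae_eq_integral_abs mu mD (measurable_int mu intf)).
have -> : (\int[mu]_(x in D) `|(EFin \o f) x| = \int[mu]_(x in D) (f x)%:E)%E.
  by apply: eq_integral => x /[!inE] Dx /=; rewrite ger0_norm // f0.
by rewrite -(fineK (integrable_fin_num mD intf)) -/(Rintegral mu D f) If0.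
Qed.

Lemma Rintegral_mul_gt0 (k f : T -> R) :
  mu.-integrable D (EFin \o (k \* f)) -> measurable_fun D f ->
  (forall x, D x -> 0 < k x) -> (forall x, D x -> 0 <= f x) ->
  (0 < \int[mu]_(x in D) (f x)%:E)%E -> 0 < Rintegral mu D (k \* f).
Proof.
move=> intkf mf k0 f0 If_gt0.
have kf_ge0 x : D x -> 0 <= (k \* f) x.
  by move=> Dx; apply: mulr_ge0; [exact/ltW/k0 | exact: f0].
rewrite lt0r Rintegral_ge0 // andbT.
apply/eqP => /(ge0_Rintegral_eq0_ae _ intkf kf_ge0) kf0.
have f_ae0 : ae_eq mu D (EFin \o f) (cst 0%E).
  apply: filterS kf0 => x kfx Dx; move: (kfx Dx) => /= [] /eqP.
  by rewrite mulf_eq0 gt_eqF ?k0 //= => /eqP ->.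
move: If_gt0; rewrite (ae_eq_integral _ _ mD _ _ f_ae0) ?integral0 ?ltxx //.
exact/measurable_EFinP.
Qed.

End positive_integrals.

Section chronometric_inverse.
Context {R : realType} (r : R -> R).

Lemma rinv_ge0 t : 0 <= rinv r t.
Proof. by rewrite /rinv; case: xgetP => // v _ [/ltW]. Qed.

Lemma rinv_nonpos t : t <= 0 -> rinv r t = 0.
Proof.
move=> t_le0; rewrite /rinv xgetPN // => v [_ [rv_gt0 rvt]].
by move: rv_gt0; rewrite rvt ltNge t_le0.
Qed.

Hypothesis r_chrono : is_chronometric r.

Lemma chronometric_onto s : 0 < s -> exists v, 0 < v /\ 0 < r v /\ r v = s.
Proof.
case: r_chrono => _ r_cont _ r_at0 r_atoo s_gt0.
have [a [a_gt0 s_lt_ra]] : exists a, 0 < a /\ s < r a.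
  have [a [ra a0]] := @filter_ex _ _ (at_right_proper_filter 0) _
    (filterI ((cvgryPgt _).1 r_at0 s) (nbhs_right_gt 0)).
  by exists a.
have [b [ab rb_lt_s]] : exists b, a < b /\ r b < s.
  have [b [ab rb]] := @filter_ex _ _ (@proper_pinfty_nbhs R) _
    (filterI (nbhs_pinfty_gt (num_real a)) (cvgr_lt 0 r_atoo s s_gt0)).
  by exists b.
have r_cont_ab : {within `[a, b], continuous r}.
  apply: continuous_subspaceW r_cont => x /=; rewrite !in_itv /= andbT.
  by case/andP => /(lt_le_trans a_gt0).
have [|c] := @IVT R r a b s (ltW ab) r_cont_ab.
  by rewrite ge_min le_max (ltW rb_lt_s) (ltW s_lt_ra) orbT.
rewrite in_itv /= => /andP[ac _] rcs.
by exists c; rewrite rcs (lt_le_trans a_gt0 ac).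
Qed.

Lemma rinvP s : 0 < s -> 0 < rinv r s /\ 0 < r (rinv r s) /\ r (rinv r s) = s.
Proof. by move=> s_gt0; have := xgetPex 0 (chronometric_onto s s_gt0). Qed.

Lemma rinv_le s1 s2 : 0 < s1 -> s1 <= s2 -> rinv r s2 <= rinv r s1.
Proof.
move=> s1_gt0 s12; have s2_gt0 := lt_le_trans s1_gt0 s12.
have [v1_gt0 [rv1_gt0 rv1]] := rinvP _ s1_gt0.
have [_ [rv2_gt0 rv2]] := rinvP _ s2_gt0.
rewrite leNgt; apply/negP => v12; case: r_chrono => _ _ r_decr _ _.
by have := r_decr _ _ v1_gt0 v12 rv1_gt0 rv2_gt0; rewrite rv1 rv2 ltNge s12.
Qed.

Lemma rinv_div_nondecreasing t : 0 < t ->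
  {homo (fun e => rinv r (t / e)) : e1 e2 / e1 <= e2}.
Proof.
move=> t_gt0 e1 e2 e12; have [e1_le0|e1_gt0] := leP e1 0.
  (* then t / e1 <= 0, where rinv returns its default value 0 *)
  by rewrite rinv_nonpos ?rinv_ge0 // pmulr_rle0 // invr_le0.
have e2_gt0 := lt_le_trans e1_gt0 e12.
by apply: rinv_le; rewrite ?divr_gt0 // ler_pM2l // lef_pV2.
Qed.

End chronometric_inverse.

Section cdf_R.
Context {R : realType} (g : R -> R).
Local Notation mu := (@lebesgue_measure R).
Hypothesis g_dens : density_R g.

Let g_ge0 v : 0 <= g v. Proof. by case: g_dens. Qed.

Lemma density_R_integrable A : measurable A -> mu.-integrable A (EFin \o g).
Proof.
case: g_dens => mg _ Ig1 mA; apply: integrableS (subsetT A) _ => //.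
apply/integrableP; split; first exact/measurable_EFinP.
under eq_integral do rewrite /= ger0_norm //.
by rewrite Ig1 ltry.
Qed.

Lemma cdf_RB a b : a <= b -> cdf_R g b - cdf_R g a = Rintegral mu `]a, b] g.
Proof. by move=> ab; rewrite /cdf_R Rintegral_itvB // density_R_integrable. Qed.

Lemma cdf_R_ge0 c : 0 <= cdf_R g c.
Proof. exact: Rintegral_ge0. Qed.

Lemma cdf_R_le1 c : cdf_R g c <= 1.
Proof.
case: g_dens => mg _ Ig1; rewrite /cdf_R /Rintegral -[1]/(fine 1%:E) -Ig1.
apply: fine_le; last 1 first.
- apply: ge0_subset_integral => //; first exact/measurable_EFinP.
  by move=> x _; rewrite lee_fin.
- by apply: integrable_fin_num => //; exact: density_R_integrable.
- by rewrite Ig1.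
Qed.

Lemma cdf_R_nondecreasing : {homo cdf_R g : a b / a <= b}.
Proof. by move=> a b ab; rewrite -subr_ge0 cdf_RB // Rintegral_ge0. Qed.

Lemma cdf_R_increasing : (forall v, 0 < g v) -> {homo cdf_R g : a b / a < b}.
Proof.
move=> g_gt0 a b ab; rewrite -subr_gt0 cdf_RB ?ltW //.
have -> : Rintegral mu `]a, b] g = Rintegral mu `]a, b] (g \* cst 1).
  by apply: eq_Rintegral => v _; rewrite /= mulr1.
apply: Rintegral_mul_gt0 => //.
- apply: eq_integrable (density_R_integrable _ _) => // v _.
  by rewrite /= mulr1.
- rewrite (_ : (fun x => (cst 1 x)%:E) = cst 1%E) // integral_cst //.
  rewrite mul1e; have /= := @lebesgue_measure_itv R `]a, b].
  rewrite lte_fin ab => ->.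
  by rewrite -EFinD lte_fin subr_gt0.
Qed.

Lemma cdf_R_translate (k : R -> R) s : (forall w, k w = g (w + s)) ->
  forall c, cdf_R k c = cdf_R g (c + s).
Proof.
move=> kE c; rewrite /cdf_R /Rintegral; congr fine.
have -> : `]-oo, c]%classic = (fun w => w + s) @^-1` `]-oo, c + s]%classic
    :> set R.
  by apply/seteqP; split => w /=; rewrite !in_itv /= lerD2r.
under eq_integral do rewrite kE.
case: g_dens => mg _ _; rewrite (ge0_integral_addr s _ (EFin \o g)) //.
exact/measurable_EFinP.
Qed.

End cdf_R.

Lemma cdf_Rplus0 {R : realType} (f : R -> R) : cdf_Rplus f 0 = 0.
Proof. by rewrite /cdf_Rplus set_itv1 Rintegral_set1. Qed.

Lemma reflected_symmetric_translate {R : realType} (a b : R -> R) c :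
  (forall w, b w = a (- w)) -> (forall d, 0 <= d -> a (c + d) = a (c - d)) ->
  forall w, b w = a (w + c *+ 2).
Proof.
move=> bE a_sym w; rewrite bE; have [wc_ge0|wc_lt0] := leP 0 (w + c).
  have := a_sym _ wc_ge0.
  have -> : c + (w + c) = w + c *+ 2 by rewrite mulr2n; ring.
  by have -> : c - (w + c) = - w by ring.
have := a_sym (- (w + c)); rewrite oppr_ge0 ltW // => /(_ isT).
have -> : c + - (w + c) = - w by ring.
by have -> : c - - (w + c) = w + c *+ 2 by rewrite mulr2n; ring.
Qed.

Definition generated_integral {R : realType} (r h G : R -> R) (t : R) : R :=
  Rintegral (@lebesgue_measure R) (@Rplus_set R)
    (fun e => (1 - G (rinv r (t / e))) * h e).

Section generated_integral.
Context {R : realType} (r h g : R -> R).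
Local Notation mu := (@lebesgue_measure R).
Local Notation G := (cdf_R g).
Hypotheses (r_chrono : is_chronometric r) (h_dens : density_Rplus h)
  (g_dens : density_R g).

Let mRplus : measurable (@Rplus_set R). Proof. exact: measurable_itv. Qed.

Let h_ge0 e : (@Rplus_set R) e -> 0 <= h e.
Proof.
by case: h_dens => _ + _; rewrite /Rplus_set /= in_itv /= andbT; apply.
Qed.

Let h_integrable : mu.-integrable (@Rplus_set R) (EFin \o h).
Proof.
case: h_dens => mh _ Ih1; apply/integrableP; split.
  exact/measurable_EFinP.
apply: (@le_lt_trans _ _ (\int[mu]_(e in @Rplus_set R) (h e)%:E)%E).
  apply: ge0_le_integral => //; first exact/measurableT_comp/measurable_EFinP.
  - exact/measurable_EFinP.
  - by move=> e /h_ge0 he /=; rewrite lee_fin ger0_norm.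
by rewrite Ih1 ltry.
Qed.

Let G_unit c : 0 <= G c <= 1. Proof. by rewrite cdf_R_ge0 ?cdf_R_le1. Qed.

Let integrable_unit_diff_mul (a b : R -> R) :
  measurable_fun (@Rplus_set R) a -> measurable_fun (@Rplus_set R) b ->
  (forall e, 0 <= a e <= 1) -> (forall e, 0 <= b e <= 1) ->
  mu.-integrable (@Rplus_set R) (EFin \o ((fun e => a e - b e) \* h)).
Proof.
move=> ma mb a_unit b_unit.
apply: integrable_mul_le1 => //; first exact: measurable_funB.
move=> e _; have /andP[? ?] := a_unit e; have /andP[? ?] := b_unit e.
by rewrite ler_norml; apply/andP; split; lra.
Qed.

Lemma measurable_cdf_rinv t s : 0 < t ->
  measurable_fun (@Rplus_set R) (fun e => G (rinv r (t / e) + s)).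
Proof.
move=> t_gt0; apply: nondecreasing_measurable => // e1 e2 e12.
by rewrite cdf_R_nondecreasing // lerD2r rinv_div_nondecreasing.
Qed.

Let measurable_cdf_rinv0 t : 0 < t ->
  measurable_fun (@Rplus_set R) (fun e => G (rinv r (t / e))).
Proof.
move=> t_gt0; rewrite (_ : (fun e => _) = (fun e => G (rinv r (t / e) + 0))).
  exact: measurable_cdf_rinv.
by apply/funext => e; rewrite addr0.
Qed.

Lemma generated_integral_translateB t s : 0 < t ->
  generated_integral r h G t - generated_integral r h (fun c => G (c + s)) t =
  Rintegral mu (@Rplus_set R)
    ((fun e => G (rinv r (t / e) + s) - G (rinv r (t / e))) \* h).
Proof.
move=> t_gt0; have mG := measurable_cdf_rinv0 _ t_gt0.
have cst1_unit (e : R) : 0 <= cst 1 e <= 1 by rewrite /= ler01 lexx.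
rewrite /generated_integral -RintegralB //.
- by apply: eq_Rintegral => e _ /=; ring.
- apply: (integrable_unit_diff_mul (cst 1) (fun e => G (rinv r (t / e)))) => //.
  exact: cst1_unit.
- apply: (integrable_unit_diff_mul (cst 1)
    (fun e => G (rinv r (t / e) + s))) => //.
  + exact: measurable_cdf_rinv.
  + exact: cst1_unit.
Qed.

Lemma generated_integral_translate_le t s : 0 < t -> 0 <= s ->
  generated_integral r h (fun c => G (c + s)) t <= generated_integral r h G t.
Proof.
move=> t_gt0 s_ge0; rewrite -subr_ge0 generated_integral_translateB //.
apply: Rintegral_ge0 => e /h_ge0 he /=; apply: mulr_ge0 => //.
by rewrite subr_ge0 cdf_R_nondecreasing // lerDl.
Qed.

Lemma generated_integral_translate_lt t s : (forall v, 0 < g v) ->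
  0 < t -> 0 < s ->
  generated_integral r h (fun c => G (c + s)) t < generated_integral r h G t.
Proof.
move=> g_gt0 t_gt0 s_gt0; rewrite -subr_gt0 generated_integral_translateB //.
case: h_dens => mh _ Ih1; apply: Rintegral_mul_gt0 => //.
- apply: integrable_unit_diff_mul => //.
  + exact: measurable_cdf_rinv.
  + exact: measurable_cdf_rinv0.
- by move=> e _; rewrite subr_gt0 cdf_R_increasing // ltrDl.
- by rewrite Ih1 lte01.
Qed.

End generated_integral.

Theorem proposition5 (R : realType) (X : finType) (D : set (X * X))
    (u : X -> R) (g : X -> X -> R -> R) (r : R -> R) (h : R -> R)
    (p : X -> X -> R) (f : X -> X -> R -> R) :
  is_domain D ->
  symmetric_RUM_NCF u g r h ->
  (forall x y, x != y -> forall v, 0 < g x y v) ->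
  is_SCF_RT D p f ->
  generated_by D p f u g r h ->
  forall x y, D (x, y) ->
    let q := p x y / p y x in
    (u y <= u x -> qFSD (cdf_Rplus (f y x)) (cdf_Rplus (f x y)) q) /\
    (u y < u x -> qSFSD (cdf_Rplus (f y x)) (cdf_Rplus (f x y)) q).
Proof.
move=> [_ D_neq D_sym] [[[rum r_chrono] [h_dens _ _]] g_sym] g_gt0 [scf _] gen
  x y Dxy q.
have [Dyx xy] := (D_sym x y Dxy, D_neq x y Dxy).
have [[pxy_gt0 pxy_sum] [pyx_gt0 _]] := (scf x y Dxy, scf y x Dyx).
have [gxy_dens _ _ g_refl _] := rum x y xy.
set v := u x - u y.
have Gyx : cdf_R (g y x) = (fun c => cdf_R (g x y) (c + v *+ 2)).
  apply/funext/(cdf_R_translate _ gxy_dens) => w.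
  apply: reflected_symmetric_translate (g_sym x y xy) _ => w'.
  by rewrite g_refl opprK.
have [pyxE Fxy] := gen x y Dxy; have [pxyE Fyx] := gen y x Dyx.
have Fyx_eq t : 0 < t -> cdf_Rplus (f y x) t =
    generated_integral r h (fun c => cdf_R (g x y) (c + v *+ 2)) t / p y x.
  by move=> t_gt0; rewrite Fyx // -Gyx -pxyE (_ : 1 - p x y = p y x) //; lra.
have qFxy_eq t : 0 < t ->
    q * cdf_Rplus (f x y) t = generated_integral r h (cdf_R (g x y)) t / p y x.
  move=> t_gt0; rewrite Fxy // -pyxE (_ : 1 - p y x = p x y); last lra.
  by rewrite /q /generated_integral; field; rewrite !gt_eqF.
have FSD : 0 <= v -> qFSD (cdf_Rplus (f y x)) (cdf_Rplus (f x y)) q.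
  move=> v_ge0 t; rewrite le_eqVlt => /predU1P[<-|t_gt0].
    by rewrite !cdf_Rplus0 mulr0.
  rewrite Fyx_eq // qFxy_eq // ler_pM2r ?invr_gt0 //.
  by apply: generated_integral_translate_le; rewrite ?mulrn_wge0.
split => [uyx | uyx]; first by apply: FSD; rewrite subr_ge0.
have v_gt0 : 0 < v by rewrite subr_gt0.
split; first exact/FSD/ltW.
exists 1; split => //; rewrite Fyx_eq // qFxy_eq // ltr_pM2r ?invr_gt0 //.
apply: generated_integral_translate_lt => //; first exact: g_gt0.
by rewrite pmulrn_rgt0.
Qed.
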